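(* Let $q > 1$ be an integer. For all positive integers $n$ and $M$, if $W$ is chosen uniformly at random from $\{x_0,\ldots,x_{q-1}\}^M$, then $$\Pr\left(W \in C(n,q,M)\right) \leq \left(\frac{q}{q-1}\right)^{n-1}q^{-2^n+n+1}.$$
   Context: Fix the alphabet $\{x_0,\ldots,x_{q-1}\}$ of $q$ letters. A word $W$ is an instance of a word $V = y_0y_1\cdots y_{m-1}$ (each $y_i$ a letter) if $W = A_0A_1\cdots A_{m-1}$ with each $A_i$ a nonempty word and $A_i = A_j$ whenever $y_i = y_j$. The Zimin words are defined by $Z_0 := \varepsilon$ (the empty word) and $Z_{n+1} := Z_n z_n Z_n$ for distinct letters $z_0,z_1,\dots$. $C(n,q,M)$ denotes the set of words $W \in \{x_0,\ldots,x_{q-1}\}^M$ that are instances of $Z_n$. *)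

From mathcomp Require Import all_boot all_order all_algebra.
From Stdlib Require Import ClassicalEpsilon.
Set Implicit Arguments.
Unset Strict Implicit.
Unset Printing Implicit Defensive.

(* Zimin words over the letters z_0, z_1, ... encoded as nat:
   Z_0 = [::], Z_{n+1} = Z_n ++ [:: n] ++ Z_n. *)
Fixpoint zimin (n : nat) : seq nat :=
  if n is n'.+1 then zimin n' ++ n' :: zimin n' else [::].

(* W is an instance of V = y_0 ... y_{m-1}: W = A_0 ... A_{m-1} with each
   A_i nonempty and A_i = A_j whenever y_i = y_j. *)
Definition instance_of (A : eqType) (L : eqType) (W : seq A) (V : seq L) : Prop :=
  exists As : seq (seq A),
    [/\ size As = size V,
        all (fun a => a != [::]) As,
        W = flatten As &
        forall i j, i < size V -> j < size V ->
          nth None (map Some V) i = nth None (map Some V) j ->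
          nth [::] As i = nth [::] As j].

(* Boolean reflection of instance_of (classical), so it can define a finset. *)
Definition instanceb (A L : eqType) (W : seq A) (V : seq L) : bool :=
  if excluded_middle_informative (instance_of W V) then true else false.

Definition Cset (n q M : nat) : {set M.-tuple 'I_q} :=
  [set W : M.-tuple 'I_q | instanceb (tval W) (zimin n)].

From mathcomp Require Import all_boot all_order all_algebra.
From mathcomp Require Import zify ring.
From Stdlib Require Import ClassicalEpsilon.
Import Order.TTheory GRing.Theory Num.Theory.

Set Implicit Arguments.
Unset Strict Implicit.
Unset Printing Implicit Defensive.

(** An instance of Z_(n+1) = Z_n z_n Z_n of length M has the form U x U with
    U an instance of Z_n and x nonempty, so its length k = |U| satisfies
    2^n - 1 <= k and 2k < M; since U ++ x ++ U is determined by U and x,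
    #|C(n+1,q,M)| <= sum_k #|C(n,q,k)| q^(M-2k).  Writing
    #|C(n+1,q,M)| <= B_n q^M, this recursion gives
    B_(n+1) <= B_n sum_(k >= 2^(n+1)-1) q^-k <= B_n q/(q-1) q^(1-2^(n+1)),
    a geometric tail, starting from B_0 = 1. *)

Lemma size_zimin n : size (zimin n) = (2 ^ n).-1.
Proof.
elim: n => [//|n IH] /=.
rewrite size_cat /= IH expnS.
have := expn_gt0 2 n; lia.
Qed.

Lemma nth_ziminS n i : i < size (zimin n) ->
  nth 0 (zimin n.+1) ((size (zimin n)).+1 + i) = nth 0 (zimin n.+1) i.
Proof.
move=> lt_i /=; rewrite !nth_cat lt_i ltnNge addSn ltnW ?leq_addr //=.
by rewrite -addnS addKn.
Qed.

Lemma instancebP (A L : eqType) (W : seq A) (V : seq L) :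
  reflect (instance_of W V) (instanceb W V).
Proof. by rewrite /instanceb; case: excluded_middle_informative => ?; constructor. Qed.

Lemma instance_size_leq (A L : eqType) (W : seq A) (V : seq L) :
  instance_of W V -> size V <= size W.
Proof.
case=> As [<- nonempty -> _].
elim: As nonempty => [//|a As IH] /= /andP[a_ne /IH].
by rewrite size_cat; case: a a_ne => //= ? ? _; lia.
Qed.

Lemma instance_ziminS (A : eqType) (W : seq A) n :
  instance_of W (zimin n.+1) ->
  exists U x, [/\ W = U ++ x ++ U, x != [::] & instance_of U (zimin n)].
Proof.
case=> As [size_As nonempty -> consistent].
pose m := size (zimin n).
have size_ziminS : size (zimin n.+1) = (m + m).+1 by rewrite /= size_cat /= addnS.
rewrite size_ziminS in size_As consistent.
have nth_Some i : i < (m + m).+1 ->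
    nth None (map Some (zimin n.+1)) i = Some (nth 0 (zimin n.+1) i).
  by move=> lt_i; rewrite (nth_map 0) ?size_ziminS.
set U := take m As.
have As_split : As = U ++ nth [::] As m :: U.
  rewrite -{1}(cat_take_drop m As) (drop_nth [::]); last by rewrite size_As; lia.
  congr (_ ++ _ :: _); apply: (@eq_from_nth _ [::]) => [|i].
    by rewrite size_drop size_take size_As; case: ifP; lia.
  rewrite size_drop size_As => lt_i.
  rewrite nth_drop nth_take; last by lia.
  apply: esym; apply: consistent; try lia.
  by rewrite !nth_Some ?nth_ziminS; try lia.
exists (flatten U), (nth [::] As m); split.
- by rewrite {1}As_split flatten_cat.
- by apply: (allP nonempty); apply: mem_nth; rewrite size_As; lia.
exists U; split=> //.
- by rewrite size_take size_As -/m; case: ifP; lia.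
- by apply/allP => a /mem_take; apply: (allP nonempty).
move=> i j; rewrite -/m => lt_i lt_j.
rewrite !(nth_map 0) // /U !nth_take // => -[eq_ij].
apply: consistent; try lia.
rewrite !nth_Some; try lia.
by rewrite /= !nth_cat -/m lt_i lt_j eq_ij.
Qed.

Lemma card_bigcup_leq (I T : finType) (P : pred I) (F : I -> {set T}) :
  #|\bigcup_(i | P i) F i| <= \sum_(i | P i) #|F i|.
Proof.
elim/big_rec2: _ => [|i n A _ le_A_n]; first by rewrite cards0.
exact: leq_trans (leq_card_setU _ A).1 (leq_add _ le_A_n).
Qed.

Section Counting.
Variable q : nat.

Definition framed n M k : {set M.-tuple 'I_q} :=
  [set W : M.-tuple 'I_q |
    instanceb (take k W) (zimin n) && (drop (M - k) W == take k W)].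

Lemma Cset_sub_framed n M :
  Cset n.+1 q M \subset
  \bigcup_(k < M | (2 * k < M) && ((2 ^ n).-1 <= k)) framed n M k.
Proof.
apply/subsetP => W; rewrite inE => /instancebP /instance_ziminS.
move=> [U [x [W_eq x_ne U_inst]]].
have size_W : size U + (size x + size U) = M.
  by rewrite -(size_tuple W) W_eq !size_cat.
have size_x : 0 < size x by case: (x) x_ne.
have := instance_size_leq U_inst; rewrite size_zimin.
set k := size U in size_W * => le_k.
have lt_k : k < M by lia.
apply/bigcupP; exists (Ordinal lt_k) => /=.
  by rewrite le_k andbT; lia.
rewrite inE; have -> : M - k = size (U ++ x) by rewrite size_cat; lia.
rewrite W_eq take_size_cat // catA drop_size_cat // eqxx andbT.
exact/instancebP.
Qed.

Lemma card_framed n M k : 2 * k <= M ->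
  #|framed n M k| <= #|Cset n q k| * q ^ (M - 2 * k).
Proof.
move=> le_kM.
have size_pre : minn k M = k by apply/minn_idPl; lia.
have size_mid : minn (M - 2 * k) (M - k) = M - 2 * k by apply/minn_idPl; lia.
pose f (W : M.-tuple 'I_q) :=
  (tcast size_pre [tuple of take k W],
   tcast size_mid [tuple of take (M - 2 * k) (drop k W)]).
have W_eq W : W \in framed n M k ->
    val W = take k W ++ take (M - 2 * k) (drop k W) ++ take k W.
  rewrite inE => /andP[_ /eqP drop_eq]; rewrite -{2}drop_eq.
  have -> : M - k = M - 2 * k + k by lia.
  by rewrite -drop_drop !cat_take_drop.
have f_inj : {in framed n M k &, injective f}.
  move=> W1 W2 /W_eq W1_eq /W_eq W2_eq [/(congr1 val) pre /(congr1 val) mid].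
  apply: val_inj; rewrite /= W1_eq W2_eq.
  by rewrite -!(val_tcast size_pre) -!(val_tcast size_mid) pre mid.
have -> : q ^ (M - 2 * k) = #|[set: (M - 2 * k).-tuple 'I_q]|.
  by rewrite cardsT card_tuple card_ord.
rewrite -(card_in_imset f_inj) -cardsX.
apply/subset_leq_card/subsetP => _ /imsetP [W + ->].
by rewrite !inE val_tcast andbT => /andP[].
Qed.

Lemma card_CsetS n M :
  #|Cset n.+1 q M| <=
  \sum_(k < M | (2 * k < M) && ((2 ^ n).-1 <= k))
    #|Cset n q k| * q ^ (M - 2 * k).
Proof.
apply: leq_trans (subset_leq_card (Cset_sub_framed n M)) _.
apply: leq_trans (card_bigcup_leq _ _) _.
by apply: leq_sum => k /andP[lt_k _]; apply: card_framed; apply: ltnW.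
Qed.

End Counting.

Local Open Scope ring_scope.

Lemma ler_sum_widen (R : numDomainType) (I : Type) (s : seq I) (P P' : pred I)
    (F : I -> R) :
  (forall i, P i -> P' i) -> (forall i, P' i -> 0 <= F i) ->
  \sum_(i <- s | P i) F i <= \sum_(i <- s | P' i) F i.
Proof.
move=> PP' F_ge0; rewrite [leRHS](bigID P) /= -[leLHS]addr0.
rewrite (eq_bigl P) => [|i]; last exact/andb_idl/PP'.
by rewrite lerD2l sumr_ge0 // => i /andP[/F_ge0].
Qed.

Lemma sum_geometric_tail_le (R : realFieldType) (r : R) (a M : nat) :
  0 <= r -> r < 1 -> \sum_(k < M | (a <= k)%N) r ^+ k <= r ^+ a / (1 - r).
Proof.
move=> r_ge0 r_lt1.
have tail (N : nat) :
    (\sum_(k < N | (a <= k)%N) r ^+ k) * (1 - r) = r ^+ a - r ^+ maxn a N.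
  elim: N => [|N IH]; first by rewrite big_ord0 mul0r maxn0 subrr.
  rewrite big_mkcond big_ord_recr /= -big_mkcond /= mulrDl IH.
  case: (leqP a N) => [le_aN | lt_Na].
    rewrite (elimT maxn_idPr (leqW le_aN)).
    by rewrite mulrBr mulr1 -exprSr addrA subrK.
  by rewrite (elimT maxn_idPl lt_Na) mul0r addr0.
rewrite ler_pdivlMr ?subr_gt0 // tail.
by rewrite lerBlDr lerDl exprn_ge0.
Qed.

Section Density.
Variables (R : realFieldType) (q : nat).
Hypothesis q_gt1 : (1 < q)%N.
Let Q : R := q%:R.
Let r : R := Q^-1.
Let c : R := Q / (Q - 1).

Let Q_gt0 : 0 < Q. Proof. by rewrite ltr0n ltnW. Qed.
Let Q_gt1 : 1 < Q. Proof. by rewrite ltr1n. Qed.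
Let r_ge0 : 0 <= r. Proof. by rewrite invr_ge0 ltW. Qed.
Let r_lt1 : r < 1. Proof. by rewrite invf_lt1. Qed.
Let c_ge0 : 0 <= c. Proof. by rewrite divr_ge0 ?subr_ge0 ?ltW. Qed.

Let c_eq : c = (1 - r)^-1.
Proof.
have Q_neq0 : Q != 0 by rewrite gt_eqF.
have Q1_neq0 : Q - 1 != 0 by rewrite subr_eq0 gt_eqF.
by rewrite /c /r; field; rewrite Q1_neq0 Q_neq0.
Qed.

Let expQ_split k M :
  (2 * k <= M)%N -> Q ^+ k * Q ^+ (M - 2 * k) = Q ^+ M * r ^+ k.
Proof.
move=> le_kM; rewrite -[in RHS](subnK le_kM) mul2n -addnn addnA !exprD exprVn.
by rewrite mulrK ?unitfE ?expf_neq0 ?gt_eqF // mulrC.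
Qed.

Definition zimin_density n : R := c ^+ n * r ^+ (2 ^ n.+1 - n.+2).

Let zimin_density_ge0 n : 0 <= zimin_density n.
Proof. by rewrite mulr_ge0 ?exprn_ge0. Qed.

Lemma zimin_densityS n :
  zimin_density n.+1 = zimin_density n * (r ^+ (2 ^ n.+1).-1 * c).
Proof.
have exp2_gt : (n.+2 <= 2 ^ n.+1)%N by exact: ltn_expl.
rewrite /zimin_density.
have -> : (2 ^ n.+2 - n.+3 = 2 ^ n.+1 - n.+2 + (2 ^ n.+1).-1)%N.
  by rewrite expnS; lia.
by rewrite exprS exprD; ring.
Qed.

Lemma card_Cset_le n M : #|Cset n.+1 q M|%:R <= zimin_density n * Q ^+ M.
Proof.
elim: n M => [|n IH] M.
  rewrite /zimin_density !expr0 !mul1r /Q -natrX ler_nat.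
  by rewrite -[q in (q ^ M)%N]card_ord -card_tuple max_card.
set B := zimin_density n * Q ^+ M.
have B_ge0 : 0 <= B by rewrite /B mulr_ge0 ?zimin_density_ge0 ?exprn_ge0 ?ltW.
apply: le_trans (_ : \sum_(k < M | (2 * k < M)%N && ((2 ^ n.+1).-1 <= k)%N)
                      B * r ^+ k <= _).
  have := card_CsetS q n.+1 M; rewrite -(ler_nat R) natr_sum => /le_trans; apply.
  apply: ler_sum => k /andP[/ltnW le_kM _].
  rewrite natrM natrX -mulrA -expQ_split // mulrA.
  by apply: ler_wpM2r; [rewrite exprn_ge0 ?ltW | exact: IH].
apply: le_trans (_ : \sum_(k < M | ((2 ^ n.+1).-1 <= k)%N) B * r ^+ k <= _).
  apply: ler_sum_widen => [k /andP[] // | k _].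
  by rewrite mulr_ge0 ?exprn_ge0.
rewrite -mulr_sumr zimin_densityS c_eq mulrAC.
apply: ler_wpM2r; first by rewrite exprn_ge0 ?ltW.
by apply: ler_wpM2l; [exact: zimin_density_ge0 | exact: sum_geometric_tail_le].
Qed.

End Density.

Theorem mainTheorem6 (R : realFieldType) (q n M : nat) :
  (1 < q)%N -> (0 < n)%N -> (0 < M)%N ->
  (#|Cset n q M|%:R
     / (q ^ M)%:R : R)
  <= (q%:R / (q%:R - 1)) ^+ n.-1 * (q%:R : R) ^ (- (2 ^ n)%:Z + n%:Z + 1).
Proof.
move=> q_gt1 n_gt0 _.
case: n n_gt0 => // n _ /=.
have exp_eq : (- (2 ^ n.+1)%:Z + n.+1%:Z + 1 = - (2 ^ n.+1 - n.+2)%N%:Z)%R.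
  by have := ltn_expl n.+1 (isT : (1 < 2)%N); lia.
rewrite exp_eq -invr_expz -exprVn ler_pdivrMr; last by rewrite ltr0n expn_gt0 ltnW.
by rewrite natrX; apply: card_Cset_le.
Qed.
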